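(* Let $G$ be a $(P_3+P_1)$-free graph on $n$ vertices and let $\ell \ge \chi(G)+1$ be an integer. Then $\mathcal{R}_\ell(G)$ is connected and has diameter at most $6n$.
   Context: All graphs are finite and simple. A $k$-colouring of $G$ is a map $\alpha: V(G)\to\{1,\dots,k\}$ with $\alpha(u)\neq\alpha(v)$ for every edge $uv$; $\chi(G)$ is the chromatic number. The reconfiguration graph $\mathcal{R}_k(G)$ has the $k$-colourings of $G$ as vertices, two being adjacent if they differ on exactly one vertex. $G$ is $H$-free if it has no induced subgraph isomorphic to $H$; $P_3+P_1$ is the disjoint union of a path on 3 vertices and a single vertex. *)

From mathcomp Require Import all_boot.
Set Implicit Arguments. Unset Strict Implicit. Unset Printing Implicit Defensive.

Definition simple_graph (T : finType) (e : rel T) : Prop :=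
  symmetric e /\ irreflexive e.

(* k-colourings: maps into {1..k}, encoded as 'I_k, proper on every edge. *)
Definition proper_colouring (T : finType) (e : rel T) (k : nat)
  (a : {ffun T -> 'I_k}) : bool :=
  [forall u, forall v, e u v ==> (a u != a v)].

Definition colourable (T : finType) (e : rel T) (k : nat) : bool :=
  [exists a : {ffun T -> 'I_k}, proper_colouring e a].

Lemma colourable_card (T : finType) (e : rel T) :
  irreflexive e -> colourable e #|T|.
Proof.
move=> irr; apply/existsP; exists [ffun x => enum_rank x].
apply/forallP=> u; apply/forallP=> v; apply/implyP=> euv.
rewrite !ffunE; apply/negP=> /eqP /enum_rank_inj Huv.
by rewrite Huv irr in euv.
Qed.

Lemma colourable_exists (T : finType) (e : rel T) (irr : irreflexive e) :
  exists k, colourable e k.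
Proof. by exists #|T|; apply: colourable_card. Qed.

Definition chi (T : finType) (e : rel T) (irr : irreflexive e) : nat :=
  ex_minn (colourable_exists irr).

Definition recolour_adj (T : finType) (k : nat) (a b : {ffun T -> 'I_k}) : bool :=
  #|[set v | a v != b v]| == 1.

(* a walk in R_k(G) from a to b of length (size p): p lists the successive
   colourings after a, all proper, consecutive ones adjacent, ending at b *)
Definition recolour_walk (T : finType) (e : rel T) (k : nat)
  (a : {ffun T -> 'I_k}) (p : seq {ffun T -> 'I_k}) (b : {ffun T -> 'I_k}) : bool :=
  [&& path (@recolour_adj T k) a p, all (@proper_colouring T e k) p & last a p == b].

Definition has_induced_P3P1 (T : finType) (e : rel T) : Prop :=
  exists x y z w : T,
    uniq [:: x; y; z; w] /\ e x y /\ e y z /\ ~~ e x z /\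
    ~~ e w x /\ ~~ e w y /\ ~~ e w z.

Definition P3P1_free (T : finType) (e : rel T) : Prop := ~ has_induced_P3P1 e.

From mathcomp Require Import all_boot zify.
Set Implicit Arguments. Unset Strict Implicit. Unset Printing Implicit Defensive.

(* Fix a proper colouring c with chi(G) colours. Any proper l-colouring can be
   recoloured, in at most 2n steps, into one with the same colour classes as c.
   This is proved for every vertex set V, recolouring V inside a palette reserved
   for it that has more colours than c uses on V, by induction on |V|. If V
   contains a stable set S of at least three vertices, P3+P1-freeness splits V
   into the vertices complete to S, treated by induction, and the rest, which is
   completely joined to them and induces a disjoint union of cliques, treated
   directly; being completely joined, the two parts are recoloured one after the
   other in disjoint sub-palettes. If V has no stable triple, colour classes on V
   have at most two vertices, and merging, moving and swapping single vertices
   suffices. Two colourings with the classes of c use fewer than l colours, and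
   one is turned into the other in 2n steps by moving whole colour classes; hence
   a -> a' -> b' -> b in 6n steps. *)

Definition touches (T : finType) (e : rel T) (u v : T) : bool := (u == v) || e u v.

Definition stable (T : finType) (e : rel T) (X : {set T}) : bool :=
  [forall u in X, forall v in X, ~~ e u v].

Lemma stableP (T : finType) (e : rel T) (X : {set T}) :
  reflect {in X &, forall u v, ~~ e u v} (stable e X).
Proof.
apply: (iffP forall_inP) => [H u v uX vX | H u uX]; last by apply/forall_inP => v; apply: H.
by move/forall_inP: (H u uX); apply.
Qed.

Definition same_classes_on (T A B : finType) (V : {set T}) (f : T -> A) (g : T -> B) :=
  {in V &, forall u v, (f u == f v) = (g u == g v)}.

Section Counting.
Variables (T : finType) (V : {set T}).

Lemma card_imset_same_classes (A B : finType) (f : T -> A) (g : T -> B) :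
  same_classes_on V f g -> #|f @: V| = #|g @: V|.
Proof.
suff le (A' B' : finType) (f' : T -> A') (g' : T -> B') :
    same_classes_on V f' g' -> #|g' @: V| <= #|f' @: V|.
  move=> fg; apply/eqP; rewrite eqn_leq (le _ _ g f) ?(le _ _ f g) // => u v uV vV.
  by rewrite fg.
move=> fg; case: (set_0Vmem V) => [-> | [v0 v0V]]; first by rewrite !imset0 !cards0.
pose h a := if [pick v in V | f' v == a] is Some v then g' v else g' v0.
apply: leq_trans (leq_imset_card h _); apply: subset_leq_card.
apply/subsetP => _ /imsetP [v vV ->]; apply/imsetP; exists (f' v); first exact: imset_f.
rewrite /h; case: pickP => [w /andP [wV fw] | /(_ v)]; last by rewrite vV eqxx.
by apply/eqP; rewrite -fg // eq_sym.
Qed.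

Lemma card_imsetU_disjoint (A : finType) (d : T -> A) (X Y : {set T}) :
  {in X & Y, forall x y, d x != d y} -> #|d @: (X :|: Y)| = #|d @: X| + #|d @: Y|.
Proof.
move=> H; rewrite imsetU cardsU.
suff -> : d @: X :&: d @: Y = set0 by rewrite cards0 subn0.
apply/setP => a; rewrite !inE; apply/negP => /andP [/imsetP [x xX ->] /imsetP [y yY]].
by apply/eqP; apply: H.
Qed.

Lemma exists_injection_into (A : finType) (P : {set A}) (y0 : A) : y0 \in P -> #|V| <= #|P| ->
  exists s : T -> A, {in V, forall v, s v \in P} /\ {in V &, injective s}.
Proof.
move=> y0P VP; pose s v := nth y0 (enum P) (index v (enum V)).
have idx v : v \in V -> index v (enum V) < size (enum P).
  by move=> vV; rewrite -cardE; apply: leq_trans VP; rewrite cardE index_mem mem_enum.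
exists s; split=> [v vV | u v uV vV /eqP].
  by rewrite -mem_enum; apply: mem_nth; apply: idx.
rewrite nth_uniq ?enum_uniq ?idx // => /eqP.
by apply: index_inj; rewrite ?mem_enum.
Qed.

Definition class_of (A : finType) (d : T -> A) (v : T) : {set T} := [set u in V | d u == d v].

(* Classes of size 1 and of size 2 both contribute 2 to the sum. *)
Lemma double_card_imset (A : finType) (d : T -> A) :
  {in V, forall v, #|class_of d v| <= 2} ->
  \sum_(v in V) (3 - #|class_of d v|) = 2 * #|d @: V|.
Proof.
move=> le2; rewrite (partition_big d (mem (d @: V))) /=; last by move=> v vV; apply: imset_f.
rewrite -sum1_card big_distrr /=; apply: eq_bigr => _ /imsetP [p pV ->].
rewrite (eq_bigr (fun=> 3 - #|class_of d p|)) => [|v /andP [_ /eqP dv]]; last first.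
  by rewrite /class_of dv.
rewrite sum_nat_const muln1.
have -> : #|[pred v in V | d v == d p]| = #|class_of d p| by rewrite cardsE.
have : 0 < #|class_of d p| by apply/card_gt0P; exists p; rewrite inE pV eqxx.
by move: (le2 p pV); case: #|_| => [|[|[|]]].
Qed.

Lemma card_imset_le_pairs (A B : finType) (d1 : T -> A) (d2 : T -> B) :
  {in V, forall v, #|class_of d1 v| <= 2} -> {in V, forall v, #|class_of d2 v| <= 2} ->
  {in V, forall v, #|class_of d2 v| <= #|class_of d1 v|} -> #|d1 @: V| <= #|d2 @: V|.
Proof.
move=> le1 le2 H; rewrite -(leq_pmul2l (isT : 0 < 2)) -double_card_imset // -double_card_imset //.
by apply: leq_sum => v vV; apply: leq_sub2l; apply: H.
Qed.

End Counting.

Lemma same_classes_onU (T A B : finType) (X Y : {set T}) (f : T -> A) (g : T -> B) :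
  same_classes_on X f g -> same_classes_on Y f g ->
  {in X & Y, forall x y, f x != f y /\ g x != g y} -> same_classes_on (X :|: Y) f g.
Proof.
move=> clX clY mixed u v; rewrite !inE => /orP [uX | uY] /orP [vX | vY].
- exact: clX.
- by have [/negbTE -> /negbTE ->] := mixed u v uX vY.
- by have [/negbTE fvu /negbTE gvu] := mixed v u vX uY; rewrite eq_sym fvu eq_sym gvu.
- exact: clY.
Qed.

Section P3P1Free.
Variables (T : finType) (e : rel T).
Hypotheses (sym : symmetric e) (irr : irreflexive e) (free : P3P1_free e).

Local Notation touches := (touches e).

Lemma touchesC u v : touches u v = touches v u.
Proof. by rewrite /touches eq_sym sym. Qed.

Lemma no_induced_P3P1 a v b d : e a v -> e v b -> a != b -> ~~ e a b ->
  ~~ touches d a -> ~~ touches d v -> ~~ touches d b -> False.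
Proof.
rewrite /touches !negb_or => eav evb ab eab /andP [da eda] /andP [dv edv] /andP [db edb].
apply: free; exists a, v, b, d; split; last by do !split.
have av : a != v by apply: contraTneq eav => ->; rewrite irr.
have vb : v != b by apply: contraTneq evb => ->; rewrite irr.
by rewrite /= !inE !negb_or av ab vb !(eq_sym _ d) da dv db.
Qed.

Variables (V S : {set T}).
Hypotheses (SV : S \subset V) (stS : stable e S) (S3 : 2 < #|S|).

Let S_inhabited : exists s, s \in S.
Proof. by apply/set0Pn; rewrite -card_gt0; apply: leq_trans S3. Qed.

Definition hub : {set T} := [set v in V | [forall s in S, e v s]].
Definition rim : {set T} := V :\: hub.

Lemma touches_two_hub v s1 s2 : v \in V -> s1 \in S -> s2 \in S -> s1 != s2 ->
  touches v s1 -> touches v s2 -> v \in hub.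
Proof.
move: stS => /stableP st vV s1S s2S s12 t1 t2.
have vs1 : v != s1.
  by apply: contraTneq t2 => ->; rewrite /touches negb_or s12 st.
have vs2 : v != s2.
  by apply: contraTneq t1 => ->; rewrite /touches negb_or eq_sym s12 st.
move: t1 t2; rewrite /touches (negbTE vs1) (negbTE vs2) /= => ev1 ev2.
rewrite inE vV; apply/forall_inP => s sS; apply: contraT => evs.
have ss1 : s != s1 by apply: contraNneq evs => ->.
have ss2 : s != s2 by apply: contraNneq evs => ->.
have sv : s != v by apply: contraTneq ev1 => <-; rewrite st.
exfalso; apply: (no_induced_P3P1 (a := s1) (v := v) (b := s2) (d := s)) => //.
- by rewrite sym.
- by rewrite st.
- by rewrite /touches negb_or ss1 st.
- by rewrite /touches negb_or sv sym.
- by rewrite /touches negb_or ss2 st.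
Qed.

Lemma rim_untouched v s : v \in rim -> s \in S -> exists2 t, t \in S & t != s /\ ~~ touches v t.
Proof.
rewrite inE => /andP [vhub vV] sS.
have : 1 < #|S :\ s| by move: S3; rewrite (cardsD1 s S) sS.
case/card_gt1P => t1 [t2 [t1S t2S t12]].
move: t1S t2S; rewrite !inE => /andP [t1s t1S] /andP [t2s t2S].
case: (boolP (touches v t1)) => [vt1 | nvt1]; last by exists t1.
case: (boolP (touches v t2)) => [vt2 | nvt2]; last by exists t2.
by move: vhub; rewrite (touches_two_hub vV t1S t2S t12 vt1 vt2).
Qed.

Lemma hub_rim_edge : {in hub & rim, forall f k, e f k}.
Proof.
move=> f k fhub kR; move: (fhub); rewrite inE => /andP [_ /forall_inP ef].
have [s0 s0S] := S_inhabited.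
have [a aS [_ ka]] := rim_untouched kR s0S.
have [b bS [ba kb]] := rim_untouched kR aS.
apply: contraT => efk; exfalso.
apply: (no_induced_P3P1 (a := a) (v := f) (b := b) (d := k)) => //.
- by rewrite sym ef.
- exact: ef.
- by rewrite eq_sym.
- by move/stableP: stS; apply.
- rewrite touchesC /touches negb_or efk andbT.
  by apply: contraTneq fhub => ->; move: kR; rewrite inE => /andP [].
Qed.

Lemma rim_touches_edge u w s : u \in rim -> w \in rim -> e u w -> s \in S ->
  touches u s -> touches w s.
Proof.
move=> uR wR euw sS tus; apply: contraT => nws.
have uV : u \in V by move: uR; rewrite inE => /andP [].
have us : u != s by apply: contraNneq nws => <-; rewrite /touches sym euw orbT.
have eus : e u s by move: tus; rewrite /touches (negbTE us).
have [t tS [ts nwt]] := rim_untouched wR sS.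
have nut : ~~ touches u t.
  apply: contraT => /negPn tut; move: uR; rewrite inE.
  by rewrite (touches_two_hub uV sS tS _ tus tut) // eq_sym.
exfalso; apply: (no_induced_P3P1 (a := s) (v := u) (b := w) (d := t)) => //.
- by rewrite sym.
- by apply: contraNneq nws => <-; rewrite /touches eqxx.
- by apply: contra nws => esw; rewrite /touches sym esw orbT.
- by move/stableP: stS => st; rewrite /touches negb_or ts st.
- by rewrite touchesC.
- by rewrite touchesC.
Qed.

Lemma rim_cluster : {in rim & &, forall u w x, e u w -> e u x -> w != x -> e w x}.
Proof.
move=> u w x uR wR xR euw eux wx; apply: contraT => nwx.
have [s0 s0S] := S_inhabited.
have [a aS [_ nua]] := rim_untouched uR s0S.
have nwa : ~~ touches w a by apply: contra nua; apply: rim_touches_edge wR uR _ aS; rewrite sym.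
have nxa : ~~ touches x a by apply: contra nua; apply: rim_touches_edge xR uR _ aS; rewrite sym.
exfalso; apply: (no_induced_P3P1 (a := w) (v := u) (b := x) (d := a)) => //.
- by rewrite sym.
- by rewrite touchesC.
- by rewrite touchesC.
- by rewrite touchesC.
Qed.

Lemma hub_sub : hub \subset V.
Proof. by apply/subsetP => v; rewrite inE => /andP []. Qed.

Lemma hub_rimU : hub :|: rim = V.
Proof. by rewrite /rim -{1}(setIidPr hub_sub) setID. Qed.

Lemma card_hub_rim : #|hub| + #|rim| = #|V|.
Proof. by rewrite /rim -{1}(setIidPr hub_sub) cardsID. Qed.

Lemma card_hub_lt : #|hub| < #|V|.
Proof.
have [s sS] := S_inhabited.
rewrite -card_hub_rim -[X in X < _]addn0 ltn_add2l card_gt0; apply/set0Pn; exists s.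
rewrite !inE (subsetP SV) // andbT; apply/negP => /forall_inP /(_ s sS).
by rewrite irr.
Qed.

End P3P1Free.

Section Reachability.
Variables (T : finType) (e : rel T) (l : nat).
Hypotheses (sym : symmetric e) (irr : irreflexive e).
Local Notation colouring := {ffun T -> 'I_l}.

Definition reachable (g h : colouring) (n : nat) : Prop :=
  exists p, recolour_walk e g p h /\ size p <= n.

Lemma properP (g : colouring) :
  reflect (forall u v, e u v -> g u != g v) (proper_colouring e g).
Proof.
apply: (iffP forallP) => [H u v euv | H u].
  by have /forallP/(_ v)/implyP := H u; apply.
by apply/forallP => v; apply/implyP; apply: H.
Qed.

Lemma reachable_refl g : reachable g g 0.
Proof. by exists [::]; rewrite /recolour_walk /= eqxx. Qed.

Lemma reachable_le g h m n : m <= n -> reachable g h m -> reachable g h n.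
Proof. by move=> mn [p [Hp Hs]]; exists p; split => //; apply: leq_trans mn. Qed.

Lemma reachable_trans g h i m n :
  reachable g h m -> reachable h i n -> reachable g i (m + n).
Proof.
move=> [p [/and3P [P1 A1 /eqP L1] S1]] [q [/and3P [P2 A2 /eqP L2] S2]].
exists (p ++ q); split; last by rewrite size_cat leq_add.
by rewrite /recolour_walk cat_path last_cat all_cat L1 P1 P2 A1 A2 L2 eqxx.
Qed.

Lemma recolour_adj_sym : symmetric (@recolour_adj T l).
Proof.
move=> a b; rewrite /recolour_adj.
suff -> : [set v | a v != b v] = [set v | b v != a v] by [].
by apply/setP => v; rewrite !inE eq_sym.
Qed.

Lemma reachable_sym g h n : proper_colouring e g -> reachable g h n -> reachable h g n.
Proof.
move=> pg [p [/and3P [P1 A1 /eqP L1] S1]].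
exists (rev (belast g p)); split; last by rewrite size_rev size_belast.
apply/and3P; split.
- rewrite -L1 rev_path.
  by apply: sub_path P1 => x y; rewrite /= recolour_adj_sym.
- rewrite all_rev; apply/allP => x /mem_belast; rewrite inE.
  by case/orP => [/eqP -> // | xp]; apply: (allP A1).
- case: p {P1 S1} L1 A1 => [|x p] /= L1 A1; first by rewrite L1.
  by rewrite rev_cons last_rcons.
Qed.

Definition recolour_set (g : colouring) (X : {set T}) (y : 'I_l) : colouring :=
  [ffun u => if u \in X then y else g u].

Definition recolour (g : colouring) (v : T) (y : 'I_l) : colouring := recolour_set g [set v] y.

Lemma recolourE g v y u : recolour g v y u = if u == v then y else g u.
Proof. by rewrite ffunE inE. Qed.

Lemma recolour_set_proper g X y : proper_colouring e g -> stable e X ->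
  (forall u w, u \in X -> e u w -> g w != y) -> proper_colouring e (recolour_set g X y).
Proof.
move=> /properP pg /stableP stX Hy; apply/properP => u w euw; rewrite !ffunE.
case: ifP => uX; case: ifP => wX.
- by move: (stX u w uX wX); rewrite euw.
- by rewrite eq_sym; apply: Hy euw.
- by apply: Hy wX _; rewrite sym.
- exact: pg.
Qed.

Lemma recolour_proper g v y : proper_colouring e g ->
  (forall w, e v w -> g w != y) -> proper_colouring e (recolour g v y).
Proof.
move=> pg Hy; apply: recolour_set_proper => // [|u w].
  by apply/stableP => u w; rewrite !inE => /eqP -> /eqP ->; rewrite irr.
by rewrite inE => /eqP ->; apply: Hy.
Qed.

Lemma reachable_recolour g v y : proper_colouring e g ->
  (forall w, e v w -> g w != y) -> reachable g (recolour g v y) 1.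
Proof.
move=> pg Hy; case: (eqVneq y (g v)) => [yv | yv].
  suff -> : recolour g v y = g by apply: reachable_le (reachable_refl g).
  by apply/ffunP => u; rewrite recolourE; case: eqP => // ->.
exists [:: recolour g v y]; split => //.
rewrite /recolour_walk /= eqxx recolour_proper // !andbT /recolour_adj.
suff -> : [set u | g u != recolour g v y u] = [set v] by rewrite cards1.
apply/setP => u; rewrite !inE recolourE.
by case: (eqVneq u v) => [-> | _]; rewrite ?eqxx // eq_sym.
Qed.

Lemma reachable_recolour_set g X y : proper_colouring e g -> stable e X ->
  (forall u w, u \in X -> e u w -> g w != y) -> reachable g (recolour_set g X y) #|X|.
Proof.
move=> pg; have [n] := ubnP #|X|; elim: n X => // n IH X; rewrite ltnS => Xn /stableP stX Hy.
have [X0 | [v vX]] := set_0Vmem X.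
  suff -> : recolour_set g X y = g by rewrite X0 cards0; apply: reachable_refl.
  by apply/ffunP => u; rewrite ffunE X0 inE.
have subX : X :\ v \subset X := subD1set X v.
have stX' : stable e (X :\ v).
  by apply/stableP => u w /(subsetP subX) uX /(subsetP subX); apply: stX.
have Hy' u w : u \in X :\ v -> e u w -> g w != y by move/(subsetP subX); apply: Hy.
have -> : recolour_set g X y = recolour (recolour_set g (X :\ v) y) v y.
  apply/ffunP => u; rewrite recolourE !ffunE !inE.
  by case: (eqVneq u v) => [-> | ]; rewrite ?vX.
rewrite (cardsD1 v X) vX add1n -addn1; apply: reachable_trans.
  by apply: IH; rewrite // (cardsD1 v X) vX in Xn.
apply: reachable_recolour; first by apply: recolour_set_proper => //; apply/stableP.
move=> w evw; rewrite ffunE !inE; case: ifP => [/andP [_ wX] | _]; last exact: Hy evw.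
by apply: contraNneq (stX v w vX wX) => _.
Qed.

Definition descends (Inv : colouring -> Prop) (phi : colouring -> nat) (g : colouring) :=
  exists g1 m, [/\ reachable g g1 m, Inv g1, 0 < m & phi g1 + m <= phi g].

Lemma reachable_by_descent (Inv Fin : colouring -> Prop) (phi : colouring -> nat) :
  (forall g, Inv g -> Fin g \/ descends Inv phi g) ->
  forall g, Inv g -> exists g', [/\ reachable g g' (phi g), Inv g' & Fin g'].
Proof.
move=> step g; have [n] := ubnP (phi g); elim: n g => // n IH g.
rewrite ltnS => Hn Ig; case: (step g Ig) => [Fg | [g1 [m [R1 I1 m0 Hm]]]].
  by exists g; split => //; apply: reachable_le (reachable_refl g).
have [|g' [R' I' F']] := IH g1 _ I1; first by lia.
exists g'; split => //; apply: reachable_le (reachable_trans R1 R'); lia.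
Qed.

Lemma descends_recolour (Inv : colouring -> Prop) phi g v y : proper_colouring e g ->
  (forall w, e v w -> g w != y) -> Inv (recolour g v y) ->
  phi (recolour g v y) < phi g -> descends Inv phi g.
Proof.
move=> pg Hy Inv1 lt; exists (recolour g v y), 1; rewrite addn1.
by split=> //; apply: reachable_recolour.
Qed.

Definition cost (F : 'I_l -> T -> nat) (D : {set T}) (g : colouring) : nat :=
  \sum_(u in D) F (g u) u.

Lemma cost_recolour_set F (D X : {set T}) (g : colouring) y : X \subset D ->
  (forall u, u \in X -> F y u < F (g u) u) -> cost F D (recolour_set g X y) + #|X| <= cost F D g.
Proof.
move=> XD H; rewrite /cost.
have -> : #|X| = \sum_(u in D) (u \in X : nat).
  rewrite -big_mkcondr /= sum1_card; apply: eq_card => u.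
  rewrite [in RHS]unfold_in /=.
  by case uX: (u \in X); rewrite ?andbT ?andbF ?(subsetP XD u uX).
rewrite -big_split /=; apply: leq_sum => u uD; rewrite ffunE.
by case: ifP => uX; [rewrite addn1; apply: H | rewrite addn0].
Qed.

Lemma cost_recolour F (D : {set T}) (g : colouring) v y : v \in D -> F y v < F (g v) v ->
  cost F D (recolour g v y) < cost F D g.
Proof.
move=> vD H; rewrite -addn1 -(cards1 v).
by apply: cost_recolour_set => [|u]; rewrite ?sub1set // inE => /eqP ->.
Qed.

Lemma cost_le F (D : {set T}) (g : colouring) m :
  (forall u, u \in D -> F (g u) u <= m) -> cost F D g <= m * #|D|.
Proof.
move=> H; rewrite /cost -sum1_card big_distrr /=; apply: leq_sum => u uD.
by rewrite muln1; apply: H.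
Qed.

End Reachability.

Section Repartition.
Variables (T : finType) (e : rel T) (l k : nat).
Hypotheses (sym : symmetric e) (irr : irreflexive e).
Variable c : {ffun T -> 'I_k}.
Hypothesis pc : proper_colouring e c.
Local Notation colouring := {ffun T -> 'I_l}.
Local Notation reachable := (reachable e).

Definition palette (V : {set T}) (P : {set 'I_l}) (g : colouring) : Prop :=
  forall v, (g v \in P) = (v \in V).

Definition recoloured_within (V : {set T}) (P : {set 'I_l}) (g0 g : colouring) : Prop :=
  [/\ proper_colouring e g, palette V P g & forall v, v \notin V -> g v = g0 v].

(* Vertices outside [V] never wear a colour of [P], so recolouring [V] inside [P]
   cannot conflict with the rest of the graph. *)
Definition partition_reachable (V : {set T}) (n : nat) : Prop :=
  forall (g : colouring) (P : {set 'I_l}),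
    proper_colouring e g -> palette V P g -> #|c @: V| < #|P| ->
  exists g', [/\ reachable g g' n, recoloured_within V P g g' & same_classes_on V g' c].

Lemma partition_reachable_le V m n :
  m <= n -> partition_reachable V m -> partition_reachable V n.
Proof.
move=> mn PV g P pg palg cV; have [g' [R W S]] := PV g P pg palg cV.
by exists g'; split => //; apply: reachable_le R.
Qed.

Lemma recoloured_within_trans V P (g0 g1 g2 : colouring) :
  recoloured_within V P g0 g1 -> recoloured_within V P g1 g2 -> recoloured_within V P g0 g2.
Proof. by move=> [_ _ off1] [pg2 pal2 off2]; split=> // v vV; rewrite off2 ?off1. Qed.

Lemma recoloured_within_widen (X W : {set T}) (P' P : {set 'I_l}) (g g1 : colouring) :
  X \subset W -> P' \subset P -> palette W P g ->
  recoloured_within X P' g g1 -> recoloured_within W P g g1.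
Proof.
move=> XW P'P palg [pg1 pal1 off1]; split=> // [v | v vW].
  case: (boolP (v \in X)) => vX; last by rewrite off1 ?palg.
  by rewrite (subsetP XW) // (subsetP P'P) // pal1.
by apply: off1; apply: contra vW; apply: (subsetP XW).
Qed.

Lemma recoloured_within_recolour V P (g0 g : colouring) v y :
  recoloured_within V P g0 g -> v \in V -> y \in P -> (forall w, e v w -> g w != y) ->
  recoloured_within V P g0 (recolour g v y).
Proof.
move=> [pg palg offg] vV yP Hy; split; first exact: recolour_proper.
  by move=> u; rewrite recolourE; case: (eqVneq u v) => [-> | _]; rewrite ?yP ?vV.
move=> u uV; rewrite recolourE; case: (eqVneq u v) => [uv | _]; last exact: offg.
by rewrite uv vV in uV.
Qed.

Section Join.
Variables (X Y : {set T}).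
Hypothesis joined : {in X & Y, forall x y, e x y}.

Lemma joined_disjoint x : x \in X -> x \notin Y.
Proof. by move=> xX; apply/negP => xY; have := joined xX xY; rewrite irr. Qed.

Lemma joined_sym : {in Y & X, forall y x, e y x}.
Proof. by move=> y x yY xX; rewrite sym joined. Qed.

Lemma palette_joined (g : colouring) P : proper_colouring e g ->
  palette (X :|: Y) P g -> palette X (P :\: g @: Y) g.
Proof.
move=> /properP pg palg v; rewrite !inE palg inE.
case: (boolP (v \in Y)) => vY.
  by rewrite (imset_f g vY); apply/esym/negbTE; apply: contraL vY; apply: joined_disjoint.
rewrite orbF andbC; case: (boolP (v \in X)) => //= vX.
by apply/imsetP => -[y yY gvy]; move: (pg v y (joined vX yY)); rewrite gvy eqxx.
Qed.

End Join.

Lemma partition_reachable_join_ordered (X Y : {set T}) a b : {in X & Y, forall x y, e x y} ->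
  partition_reachable X a -> partition_reachable Y b ->
  forall (g : colouring) P, proper_colouring e g -> palette (X :|: Y) P g ->
  #|c @: (X :|: Y)| < #|P| -> #|c @: X| < #|P :\: g @: Y| ->
  exists g', [/\ reachable g g' (a + b), recoloured_within (X :|: Y) P g g'
                & same_classes_on (X :|: Y) g' c].
Proof.
move=> jXY PX PY g P pg palg cXY cX.
have [g1 [R1 W1 clX]] := PX g _ pg (palette_joined jXY pg palg) cX.
have W1' := recoloured_within_widen (subsetUl X Y) (subsetDl P _) palg W1.
have [pg1 pal1 _] := W1'.
have palY : palette Y (P :\: g1 @: X) g1.
  by apply: (palette_joined (joined_sym jXY)); rewrite // setUC.
have cY : #|c @: Y| < #|P :\: g1 @: X|.
  have g1XP : g1 @: X \subset P.
    by apply/subsetP => _ /imsetP [x xX ->]; rewrite pal1 inE xX.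
  rewrite cardsDS // (card_imset_same_classes clX).
  move: cXY; rewrite card_imsetU_disjoint; first by lia.
  by move=> x y xX yY; apply/(properP _ c pc)/jXY.
have [g2 [R2 W2 clY]] := PY g1 _ pg1 palY cY.
have [pg2 _ off2] := W2.
exists g2; split.
- exact: reachable_trans R1 R2.
- apply: recoloured_within_trans W1' _.
  exact: recoloured_within_widen (subsetUr X Y) (subsetDl P _) pal1 W2.
- apply: same_classes_onU => // [u v uX vX | x y xX yY].
    by rewrite !off2 ?(joined_disjoint jXY) // clX.
  by split; apply/properP/jXY.
Qed.

Lemma partition_reachable_join (X Y : {set T}) a b : {in X & Y, forall x y, e x y} ->
  partition_reachable X a -> partition_reachable Y b -> partition_reachable (X :|: Y) (a + b).
Proof.
move=> jXY PX PY g P pg palg cXY.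
have gP (Z : {set T}) : Z \subset X :|: Y -> g @: Z \subset P.
  by move=> ZXY; apply/subsetP => _ /imsetP [z zZ ->]; rewrite palg (subsetP ZXY).
have gXP := gP X (subsetUl X Y); have gYP := gP Y (subsetUr X Y).
have cU : #|c @: (X :|: Y)| = #|c @: X| + #|c @: Y|.
  by apply: card_imsetU_disjoint => x y xX yY; apply/(properP _ c pc)/jXY.
have gU : #|g @: X| + #|g @: Y| <= #|P|.
  rewrite -card_imsetU_disjoint ?subset_leq_card ?gP //.
  by move=> x y xX yY; apply/(properP _ g pg)/jXY.
(* A part using at most as many colours as [c] needs on it leaves enough of [P] for
   the other part to go first. *)
case: (leqP #|g @: Y| #|c @: Y|) => hY.
  apply: (partition_reachable_join_ordered jXY PX PY pg palg cXY).
  rewrite cardsDS // ltn_subRL; apply: leq_ltn_trans cXY.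
  by rewrite cU addnC leq_add2l.
rewrite addnC setUC in cXY palg *.
apply: (partition_reachable_join_ordered (joined_sym jXY) PY PX pg palg cXY).
by rewrite cardsDS // ltn_subRL; apply: leq_trans gU; rewrite ltn_add2l.
Qed.

Section Cluster.
Variable K : {set T}.
Hypothesis clusterK : {in K & &, forall u w x, e u w -> e u x -> w != x -> e w x}.
Variables (P : {set 'I_l}) (tg : T -> 'I_l) (g0 : colouring).
Hypotheses (tgP : {in K, forall v, tg v \in P}) (tg_classes : same_classes_on K tg c).
Hypothesis cK : #|c @: K| < #|P|.

Definition clique_at (v : T) : {set T} := [set w in K | touches e v w].

(* Wearing the target colour of a clique neighbour costs 2, so that moving such a
   vertex to a colour that is no target in its clique is progress. *)
Definition cluster_cost (x : 'I_l) (v : T) : nat :=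
  if x == tg v then 0 else if x \in tg @: clique_at v then 2 else 1.

Local Notation Inv := (recoloured_within K P g0).

Lemma clique_at_edge w x y : w \in K -> x \in clique_at w -> y \in clique_at w -> x != y -> e x y.
Proof.
move=> wK; rewrite !inE /touches => /andP [xK /orP [/eqP <- | ewx]] /andP [yK /orP [/eqP <- | ewy]].
- by rewrite eqxx.
- by [].
- by rewrite sym.
- exact: (clusterK wK xK yK).
Qed.

Lemma card_imset_clique_at (g : colouring) w : w \in K -> #|g @: clique_at w| < #|P|.
Proof.
move=> wK; apply: leq_ltn_trans (leq_imset_card _ _) _; apply: leq_ltn_trans cK.
rewrite -(card_in_imset (f := c)) => [|x y xC yC cxy]; last first.
  apply/eqP; apply: contraT => xy.
  by have /(properP _ c pc) := clique_at_edge wK xC yC xy; rewrite cxy eqxx.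
by apply/subset_leq_card/imsetS/subsetP => x; rewrite inE => /andP [].
Qed.

Lemma blocked_targets_used (g : colouring) w : Inv g -> w \in K ->
  {in K, forall x, g x != tg x -> exists2 b, e x b & g b = tg x} ->
  tg @: clique_at w \subset g @: clique_at w.
Proof.
move=> [_ palg _] wK blocked; apply/subsetP => _ /imsetP [x xC ->].
have xK : x \in K by move: xC; rewrite inE => /andP [].
case: (eqVneq (g x) (tg x)) => [<- | nfx]; first exact: imset_f.
have [b exb gb] := blocked x xK nfx.
have bK : b \in K by rewrite -palg gb tgP.
rewrite -gb; apply: imset_f; rewrite !inE bK /touches.
move: xC; rewrite inE /touches => /andP [_ /orP [/eqP wx | ewx]]; first by rewrite wx exb orbT.
case: (eqVneq w b) => //= wb.
by apply: (clusterK xK wK bK) => //; rewrite sym.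
Qed.

Lemma cluster_step (g : colouring) : Inv g ->
  {in K, forall v, g v = tg v} \/ descends e Inv (cost cluster_cost K) g.
Proof.
move=> Ig; have [pg palg _] := Ig.
case: (boolP [exists v in K, (g v != tg v) && [forall w, e v w ==> (g w != tg v)]]).
  case/exists_inP => v vK /andP [nfv /forallP free]; right.
  have Hy w : e v w -> g w != tg v by apply/implyP.
  apply: (descends_recolour sym irr pg Hy).
    exact: recoloured_within_recolour Ig vK (tgP vK) Hy.
  by apply: cost_recolour; rewrite // /cluster_cost eqxx (negbTE nfv); case: ifP.
move/exists_inPn => stuck.
have blocked : {in K, forall x, g x != tg x -> exists2 b, e x b & g b = tg x}.
  move=> x xK nfx; move: (stuck x xK); rewrite nfx /= => /forallPn [b].
  by rewrite negb_imply negbK => /andP [exb /eqP gb]; exists b.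
case: (boolP [forall v in K, g v == tg v]) => [/forall_inP done | /forall_inPn [v0 v0K nf0]].
  by left => v vK; apply/eqP/done.
right; have [w0 ew0 gw0] := blocked v0 v0K nf0.
have w0K : w0 \in K by rewrite -palg gw0 tgP.
have [y yP yC] : exists2 y, y \in P & y \notin g @: clique_at w0.
  apply/subsetPn; apply: contraTN (card_imset_clique_at g w0K).
  by move/subset_leq_card; rewrite leqNgt.
have Hy b : e w0 b -> g b != y.
  move=> eb; apply/eqP => gb; have bK : b \in K by rewrite -palg gb.
  by move: yC; rewrite -gb imset_f // inE bK /touches eb orbT.
apply: (descends_recolour sym irr pg Hy); first exact: recoloured_within_recolour Ig w0K yP Hy.
apply: cost_recolour => //.
have v0C : v0 \in clique_at w0 by rewrite inE v0K /touches sym ew0 orbT.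
have w0C : w0 \in clique_at w0 by rewrite inE w0K /touches eqxx.
have ytg : y \notin tg @: clique_at w0.
  exact: contra (subsetP (blocked_targets_used Ig w0K blocked) y) yC.
have ytg0 : (y == tg w0) = false by apply: contraNF ytg => /eqP ->; apply: imset_f.
have tg0 : (tg v0 == tg w0) = false by rewrite tg_classes //; apply/negbTE/(properP _ c pc).
by rewrite /cluster_cost (negbTE ytg) gw0 imset_f // ytg0 tg0.
Qed.

End Cluster.

Lemma partition_reachable_cluster (K : {set T}) :
  {in K & &, forall u w x, e u w -> e u x -> w != x -> e w x} ->
  partition_reachable K (2 * #|K|).
Proof.
move=> clusterK g P pg palg cK.
have [y0 y0P] : exists y0, y0 \in P by apply/set0Pn; rewrite -card_gt0; apply: leq_ltn_trans cK.
have [s [sP s_inj]] := exists_injection_into y0P (ltnW cK).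
pose tg v := s (c v).
have tgP : {in K, forall v, tg v \in P} by move=> v vK; apply/sP/imset_f.
have tg_classes : same_classes_on K tg c.
  move=> u v uK vK; rewrite /tg; apply/eqP/eqP => [E | -> //].
  by apply: s_inj E; apply: imset_f.
have Ig : recoloured_within K P g g by split=> // v vK.
have step := cluster_step clusterK tgP tg_classes cK (g0 := g).
have [g' [R Ig' fin]] := reachable_by_descent step Ig.
exists g'; split => //.
- apply: reachable_le R; apply: cost_le => v _.
  by rewrite /cluster_cost; case: ifP => //; case: ifP.
- by move=> u v uK vK; rewrite !fin //; apply: tg_classes.
Qed.

Section NoStableTriple.
Variable V : {set T}.
Hypothesis alpha_le2 : forall S : {set T}, S \subset V -> stable e S -> #|S| <= 2.
Variables (P : {set 'I_l}) (g0 : colouring).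
Hypothesis cV : #|c @: V| < #|P|.

Local Notation Inv := (recoloured_within V P g0).

Lemma card_class_le2 m (d : {ffun T -> 'I_m}) v :
  proper_colouring e d -> #|class_of V d v| <= 2.
Proof.
move=> /properP pd; apply: alpha_le2; first by apply/subsetP => u; rewrite inE => /andP [].
apply/stableP => u w; rewrite !inE => /andP [_ /eqP du] /andP [_ /eqP dw].
by apply: contraTN isT => /pd; rewrite du dw eqxx.
Qed.

Lemma class_pair m (d : {ffun T -> 'I_m}) u v t : proper_colouring e d ->
  u \in V -> v \in V -> t \in V -> u != v -> d u = d v -> (d t == d v) = (t == u) || (t == v).
Proof.
move=> pd uV vV tV uv duv.
have sub : [set u; v] \subset class_of V d v.
  by apply/subsetP => x; rewrite !inE => /orP [] /eqP ->; rewrite ?uV ?vV ?duv eqxx.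
have /eqP class_uv : [set u; v] == class_of V d v.
  by rewrite eqEcard sub cards2 uv (card_class_le2 _ pd).
by rewrite -[RHS](in_set2 t u v) class_uv inE tV.
Qed.

Definition settled (g : colouring) (v : T) : bool :=
  [forall u in V, (g u == g v) == (c u == c v)].

Definition unsettled (g : colouring) : nat := #|[set v in V | ~~ settled g v]|.

Lemma settledP (g : colouring) v :
  reflect {in V, forall u, (g u == g v) = (c u == c v)} (settled g v).
Proof.
by apply: (iffP forall_inP) => H u uV; [have /eqP := H u uV | rewrite H].
Qed.

Lemma settled_recolour (g : colouring) v y z : settled g z -> z != v ->
  (y == g z) = (c v == c z) -> settled (recolour g v y) z.
Proof.
move=> /settledP sz zv yz; apply/settledP => t tV; rewrite !recolourE (negbTE zv).
by case: (eqVneq t v) => [-> | _]; [exact: yz | exact: sz].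
Qed.

Lemma settled_transfer (g : colouring) v u :
  settled g v -> g u = g v -> c u = c v -> settled g u.
Proof. by move=> /settledP sv guv cuv; apply/settledP => t tV; rewrite guv cuv sv. Qed.

Lemma settled_recolour_free (g : colouring) w x z : w \in V -> ~~ settled g w ->
  (forall t, g t != x) -> settled g z -> settled (recolour g w x) z.
Proof.
move=> wV nw xfree sz; have zw : z != w by apply: contraNneq nw => <-.
apply: settled_recolour => //; rewrite eq_sym (negbTE (xfree z)); apply/esym/negbTE.
apply: contra nw => /eqP cwz; move/settledP: (sz) => /(_ w wV); rewrite cwz eqxx => /eqP gwz.
by apply/settledP => t tV; move/settledP: sz => /(_ t tV); rewrite gwz cwz.
Qed.

Lemma unsettled_drop (g g1 : colouring) (N : {set T}) :
  N \subset [set v in V | ~~ settled g v] ->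
  {in V, forall z, settled g z -> settled g1 z} -> {in N, forall z, settled g1 z} ->
  unsettled g1 + #|N| <= unsettled g.
Proof.
move=> NU keep settle; rewrite /unsettled.
have sub : [set v in V | ~~ settled g1 v] \subset [set v in V | ~~ settled g v] :\: N.
  apply/subsetP => z; rewrite !inE => /andP [zV nz]; rewrite zV /=.
  apply/andP; split; first by apply: contra nz => /settle.
  by apply: contra nz; apply: keep.
by rewrite addnC -leq_subRL ?subset_leq_card // -cardsDS // subset_leq_card.
Qed.

Lemma merge_step (g : colouring) v u : Inv g -> v \in V -> u \in V -> ~~ settled g v ->
  u != v -> c u = c v -> {in V, forall t, g t = g u -> t = u} ->
  exists g1, [/\ reachable g g1 1, Inv g1 & unsettled g1 + 2 <= unsettled g].
Proof.
move=> Ig vV uV nv uv cuv single; have [pg palg _] := Ig.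
have guP : g u \in P by rewrite palg.
have Hy b : e v b -> g b != g u.
  move=> evb; apply/eqP => gbu; have bV : b \in V by rewrite -palg gbu.
  by move: evb; rewrite (single b bV gbu) => /(properP _ c pc); rewrite cuv eqxx.
have nu : ~~ settled g u.
  apply/negP => /settledP/(_ v vV); rewrite cuv eqxx => /eqP/(single v vV) vu.
  by rewrite vu eqxx in uv.
pose g1 := recolour g v (g u).
have sv1 : settled g1 v.
  apply/settledP => t tV; rewrite !recolourE eqxx.
  case: (eqVneq t v) => [-> | tv]; first by rewrite !eqxx.
  rewrite (class_pair pc uV vV tV uv cuv) (negbTE tv) orbF.
  by apply/eqP/eqP => [/(single t tV) | ->].
exists g1; split.
- exact: (reachable_recolour sym irr pg Hy).
- exact: recoloured_within_recolour Ig vV guP Hy.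
- have <- : #|[set u; v]| = 2 by rewrite cards2 uv.
  apply: unsettled_drop.
  + by apply/subsetP => z; rewrite !inE => /orP [] /eqP ->; rewrite ?uV ?vV ?nu ?nv.
  + move=> z zV sz; have zv : z != v by apply: contraNneq nv => <-.
    have zu : z != u by apply: contraNneq nu => <-.
    apply: settled_recolour => //.
    rewrite eq_sym [c v == _]eq_sym (class_pair pc uV vV zV uv cuv) (negbTE zu) (negbTE zv).
    by apply/negbTE; apply: contra zu => /eqP/(single z zV) ->.
  + move=> z; rewrite !inE => /orP [] /eqP -> //.
    by apply: settled_transfer sv1 _ cuv; rewrite !recolourE eqxx (negbTE uv).
Qed.

Lemma free_colour (g : colouring) : Inv g ->
  (forall v u, v \in V -> u \in V -> ~~ settled g v -> u != v -> c u = c v ->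
     exists2 t, t \in V & g t = g u /\ t != u) ->
  exists2 x, x \in P & forall t, g t != x.
Proof.
move=> Ig stuck; have [pg palg _] := Ig.
(* When stuck, every singleton class of [g] is one of [c]; counting classes of size
   at most 2 then shows that [g] uses no more colours on [V] than [c]. *)
have le : #|g @: V| <= #|c @: V|.
  apply: card_imset_le_pairs => [v _ | v _ | v vV]; rewrite ?card_class_le2 //.
  case: (leqP 2 #|class_of V g v|) => [|lt2]; first exact: leq_trans (card_class_le2 v pc).
  have single w : w \in V -> g w = g v -> w = v.
    move=> wV gwv; apply/eqP; apply: contraLR lt2 => wv; rewrite -leqNgt.
    have <- : #|[set w; v]| = 2 by rewrite cards2 wv.
    apply/subset_leq_card/subsetP => x.
    by rewrite !inE => /orP [] /eqP ->; rewrite ?wV ?vV ?gwv eqxx.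
  apply: leq_trans (_ : 1 <= _); last by apply/card_gt0P; exists v; rewrite inE vV eqxx.
  rewrite -(cards1 v); apply/subset_leq_card/subsetP => t; rewrite !inE => /andP [tV /eqP ctv].
  apply/contraT => tv; have nt : ~~ settled g t.
    apply/negP => /settledP/(_ v vV); rewrite ctv eqxx => /eqP/esym/(single t tV) tv'.
    by rewrite tv' eqxx in tv.
  have vt : v != t by rewrite eq_sym.
  have [w wV [gw]] := stuck t v tV vV nt vt (esym ctv).
  by rewrite (single w wV gw) eqxx.
have [x xP xn] : exists2 x, x \in P & x \notin g @: V.
  apply/subsetPn; apply: contraTN cV => /subset_leq_card PgV.
  by rewrite -leqNgt (leq_trans PgV le).
exists x => // t; apply: contraNneq xn => gtx.
by rewrite -gtx imset_f // -palg gtx.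
Qed.

Lemma alone_step (g : colouring) v x : Inv g -> v \in V -> ~~ settled g v ->
  {in V, forall t, c t = c v -> t = v} -> x \in P -> (forall t, g t != x) ->
  descends e Inv unsettled g.
Proof.
move=> Ig vV nv alone xP xfree; have [pg _ _] := Ig.
have Hy w : e v w -> g w != x by move=> _; apply: xfree.
apply: (descends_recolour sym irr pg Hy); first exact: recoloured_within_recolour Ig vV xP Hy.
rewrite -addn1 -(cards1 v); apply: unsettled_drop.
- by apply/subsetP => z; rewrite !inE => /eqP ->; rewrite vV.
- by move=> z zV; apply: settled_recolour_free.
- move=> z; rewrite inE => /eqP ->; apply/settledP => t tV; rewrite !recolourE eqxx.
  case: (eqVneq t v) => [-> | tv]; first by rewrite !eqxx.
  rewrite (negbTE (xfree t)); apply/esym/negbTE; apply: contra tv => /eqP ctv.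
  by rewrite (alone t tV ctv).
Qed.

(* [w] shares the colour of [u] and blocks merging [v] into the class of [u]; moving
   [w] to a free colour first makes [u] a singleton class. *)
Lemma swap_step (g : colouring) v u w x : Inv g -> v \in V -> u \in V -> w \in V ->
  ~~ settled g v -> u != v -> c u = c v -> w != u -> g w = g u ->
  x \in P -> (forall t, g t != x) -> descends e Inv unsettled g.
Proof.
move=> Ig vV uV wV nv uv cuv wu gwu xP xfree; have [pg _ _] := Ig.
have g_class t : t \in V -> (g t == g u) = (t == w) || (t == u).
  by move=> tV; apply: class_pair.
have c_class t : t \in V -> (c t == c v) = (t == u) || (t == v).
  by move=> tV; apply: class_pair.
have wv : w != v.
  apply: contraNneq nv => wv; have gvu : g v = g u by rewrite -wv.
  by apply/settledP => t tV; rewrite gvu g_class // c_class // -wv orbC.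
have cwu : (c w == c u) = false by rewrite cuv c_class // (negbTE wu) (negbTE wv).
have nw : ~~ settled g w by apply/negP => /settledP/(_ u uV); rewrite gwu eqxx eq_sym cwu.
pose g1 := recolour g w x.
have Hx b : e w b -> g b != x by move=> _; apply: xfree.
have R1 : reachable g g1 1 := reachable_recolour sym irr pg Hx.
have Ig1 : Inv g1 := recoloured_within_recolour Ig wV xP Hx.
have U1 : unsettled g1 <= unsettled g.
  rewrite -[unsettled g1]addn0 -(cards0 T).
  apply: unsettled_drop => [|z zV|z]; rewrite ?sub0set ?inE //.
  exact: settled_recolour_free.
have g1u : g1 u = g u by rewrite recolourE eq_sym (negbTE wu).
have nv1 : ~~ settled g1 v.
  have g1v : g1 v = g v by rewrite recolourE eq_sym (negbTE wv).
  apply/negP => /settledP/(_ u uV); rewrite cuv eqxx g1u g1v eq_sym g_class //.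
  by rewrite eq_sym (negbTE wv) eq_sym (negbTE uv).
have single1 : {in V, forall t, g1 t = g1 u -> t = u}.
  move=> t tV; rewrite g1u recolourE; case: (eqVneq t w) => [_ /esym/eqP | tw /eqP].
    by rewrite (negbTE (xfree u)).
  by rewrite g_class // (negbTE tw) => /eqP.
have [g2 [R2 Ig2 U2]] := merge_step Ig1 vV uV nv1 uv cuv single1.
exists g2, 2; split => //; first exact: reachable_trans R1 R2.
exact: leq_trans U2 U1.
Qed.

Lemma no_stable3_step (g : colouring) : Inv g ->
  {in V, forall v, settled g v} \/ descends e Inv unsettled g.
Proof.
move=> Ig; case: (boolP [forall v in V, settled g v]) => [/forall_inP | /forall_inPn [v vV nv]].
  by left.
right; case: (boolP [exists v in V, exists u in V, [&& ~~ settled g v, u != v, c u == c v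
                                                    & [forall t in V, (g t == g u) ==> (t == u)]]]).
  case/exists_inP => {}v {}vV /exists_inP [u uV /and4P [{}nv uv /eqP cuv /forall_inP single]].
  have [|g1 [R1 I1 U1]] := merge_step Ig vV uV nv uv cuv.
    by move=> t tV /eqP gtu; apply/eqP/(implyP (single t tV)).
  by exists g1, 1; split => //; apply: leq_trans U1; rewrite leq_add2l.
move/exists_inPn => stuck.
have stuck' v' u : v' \in V -> u \in V -> ~~ settled g v' -> u != v' -> c u = c v' ->
    exists2 t, t \in V & g t = g u /\ t != u.
  move=> vV' uV nv' uv cuv; move/exists_inPn: (stuck v' vV') => /(_ u uV).
  rewrite nv' uv cuv eqxx /= => /forall_inPn [t tV].
  by rewrite negb_imply => /andP [/eqP gtu tu]; exists t.
have [x xP xfree] := free_colour Ig stuck'.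
case: (boolP [forall t in V, (c t == c v) ==> (t == v)]).
  move=> /forall_inP alone; apply: (alone_step Ig vV nv _ xP xfree) => t tV /eqP ctv.
  by apply/eqP/(implyP (alone t tV)).
case/forall_inPn => u uV; rewrite negb_imply => /andP [/eqP cuv uv].
have [w wV [gwu wu]] := stuck' v u vV uV nv uv cuv.
exact: swap_step Ig vV uV wV nv uv cuv wu gwu xP xfree.
Qed.

End NoStableTriple.

Lemma partition_reachable_no_stable3 (V : {set T}) :
  (forall S : {set T}, S \subset V -> stable e S -> #|S| <= 2) -> partition_reachable V #|V|.
Proof.
move=> alpha_le2 g P pg palg cV.
have Ig : recoloured_within V P g g by split.
have [g' [R Ig' fin]] := reachable_by_descent (no_stable3_step alpha_le2 cV (g0 := g)) Ig.
exists g'; split => //.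
  apply: reachable_le R; apply/subset_leq_card/subsetP => v.
  by rewrite inE => /andP [].
by move=> u v uV vV; have /settledP := fin v vV; apply.
Qed.

End Repartition.

Lemma partition_reachable_P3P1_free (T : finType) (e : rel T) (l k : nat)
  (c : {ffun T -> 'I_k}) : symmetric e -> irreflexive e -> P3P1_free e ->
  proper_colouring e c -> forall V : {set T}, partition_reachable e l c V (2 * #|V|).
Proof.
move=> sym irr free pc V; have [n] := ubnP #|V|; elim: n V => // n IH V; rewrite ltnS => Vn.
case: (boolP [exists S : {set T}, [&& S \subset V, stable e S & 2 < #|S|]]); last first.
  move/existsPn => alpha_le2.
  apply: partition_reachable_le (partition_reachable_no_stable3 sym irr pc _); first by lia.
  move=> S SV stS; rewrite leqNgt; apply: contraNN (alpha_le2 S) => S3.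
  by rewrite SV stS.
case/existsP => S /and3P [SV stS S3].
have Phub := IH (hub e V S) (leq_trans (card_hub_lt irr SV S3) Vn).
have Prim : partition_reachable e l c (rim e V S) (2 * #|rim e V S|) :=
  partition_reachable_cluster sym irr pc (rim_cluster sym irr free stS S3).
have := partition_reachable_join sym irr pc (hub_rim_edge sym irr free stS S3) Phub Prim.
by rewrite hub_rimU -mulnDr card_hub_rim.
Qed.

Section Relabel.
Variables (T : finType) (e : rel T) (l : nat).
Hypotheses (sym : symmetric e) (irr : irreflexive e).
Local Notation colouring := {ffun T -> 'I_l}.
Variable d : colouring.
Hypothesis card_d_lt : #|d @: [set: T]| < l.

(* As for [cluster_cost]: wearing the target colour of another class costs 2, so
   that moving a whole class to an unused non-target colour is progress. *)
Definition relabel_cost (x : 'I_l) (u : T) : nat :=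
  if x == d u then 0 else if x \in d @: [set: T] then 2 else 1.

Definition relabelling (g : colouring) : Prop :=
  proper_colouring e g /\ same_classes_on [set: T] g d.

Lemma relabelling_recolour_class (g : colouring) u y : relabelling g -> (forall w, g w != y) ->
  let X := [set w | g w == g u] in
  reachable e g (recolour_set g X y) #|X| /\ relabelling (recolour_set g X y).
Proof.
move=> [pg gd] yfree X.
have stX : stable e X.
  apply/stableP => a b; rewrite !inE => /eqP ga /eqP gb.
  by apply/negP => /(properP _ g pg); rewrite ga gb eqxx.
have Hy a b : a \in X -> e a b -> g b != y by [].
split; first exact: reachable_recolour_set.
split; first exact: recolour_set_proper.
move=> a b _ _; rewrite -gd // !ffunE !inE.
case: (eqVneq (g a) (g u)) => ga; case: (eqVneq (g b) (g u)) => gb.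
- by rewrite ga gb !eqxx.
- by rewrite eq_sym (negbTE (yfree b)) ga eq_sym (negbTE gb).
- by rewrite (negbTE (yfree a)) gb (negbTE ga).
- by [].
Qed.

Lemma descends_recolour_class (g : colouring) u y : relabelling g -> (forall w, g w != y) ->
  {in [set w | g w == g u], forall w, relabel_cost y w < relabel_cost (g w) w} ->
  descends e relabelling (cost relabel_cost [set: T]) g.
Proof.
move=> Rg yfree lt; have [R R1] := relabelling_recolour_class u Rg yfree.
exists (recolour_set g [set w | g w == g u] y), #|[set w | g w == g u]|; split => //.
- by apply/card_gt0P; exists u; rewrite inE.
- exact: cost_recolour_set (subsetT _) lt.
Qed.

Lemma relabel_step (g : colouring) : relabelling g ->
  (forall v, g v = d v) \/ descends e relabelling (cost relabel_cost [set: T]) g.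
Proof.
move=> Rg; have [pg gd] := Rg.
have d_class u w : g w = g u -> d w = d u by move=> gwu; apply/eqP; rewrite -gd ?inE // gwu.
case: (boolP [forall v, g v == d v]) => [/forallP fin | /forallPn [u0 nf0]].
  by left => v; apply/eqP.
right; case: (boolP [exists u, (g u != d u) && [forall w, g w != d u]]).
  case/existsP => u /andP [nfu /forallP ufree].
  apply: (descends_recolour_class (u := u) Rg ufree) => w.
  rewrite inE => /eqP gwu; rewrite /relabel_cost (d_class u w gwu) eqxx gwu (negbTE nfu).
  by case: ifP.
move/existsPn => stuck.
have used v : g v != d v -> exists w, g w = d v.
  move=> nfv; move: (stuck v); rewrite nfv /= => /forallPn [w].
  by rewrite negbK => /eqP gw; exists w.
have dg : d @: [set: T] \subset g @: [set: T].
  apply/subsetP => _ /imsetP [v _ ->].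
  case: (eqVneq (g v) (d v)) => [<- | nfv]; first exact: imset_f.
  by have [w <-] := used v nfv; apply: imset_f.
have [y yfree yd] : exists2 y, (forall w, g w != y) & y \notin d @: [set: T].
  have : ~~ ([set: 'I_l] \subset g @: [set: T]).
    apply/negP => /subset_leq_card.
    by rewrite cardsT card_ord (card_imset_same_classes gd) leqNgt card_d_lt.
  case/subsetPn => y _ yg; exists y; last exact: contra (subsetP dg y) yg.
  by move=> w; apply: contraNneq yg => <-; apply: imset_f.
have [w0 gw0] := used u0 nf0.
apply: (descends_recolour_class (u := w0) Rg yfree) => w; rewrite inE => /eqP gw.
have nfw : g w != d w.
  rewrite gw (d_class w0 w gw) gw0; apply: contraNneq nf0 => du.
  by apply/eqP; rewrite -gw0; apply/eqP; rewrite gd ?inE // du.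
have yw : (y == d w) = false by apply: contraNF yd => /eqP ->; apply: imset_f.
by rewrite /relabel_cost (negbTE nfw) yw (negbTE yd) gw gw0 imset_f.
Qed.

Lemma reachable_relabel (g : colouring) : relabelling g -> reachable e g d (2 * #|T|).
Proof.
move=> Rg; have [g' [R _ fin]] := reachable_by_descent relabel_step Rg.
have -> : d = g' by apply/ffunP => v; rewrite fin.
apply: reachable_le R; rewrite -cardsT; apply: cost_le => u _.
by rewrite /relabel_cost; case: ifP => //; case: ifP.
Qed.

End Relabel.

Theorem theorem6 (T : finType) (e : rel T) (sym : symmetric e)
  (irr : irreflexive e) (l : nat) :
  P3P1_free e -> chi irr + 1 <= l ->
  forall a b : {ffun T -> 'I_l},
    proper_colouring e a -> proper_colouring e b ->
    exists p : seq {ffun T -> 'I_l},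
      recolour_walk e a p b /\ size p <= 6 * #|T|.
Proof.
move=> free; rewrite /chi; case: ex_minnP => m /existsP [c pc] _ ml a b pa pb.
have cT : #|c @: [set: T]| < #|[set: 'I_l]|.
  by rewrite cardsT card_ord; apply: leq_ltn_trans (max_card _) _; rewrite card_ord -addn1.
have palT (g : {ffun T -> 'I_l}) : palette [set: T] [set: 'I_l] g by move=> v; rewrite !inE.
have partT := partition_reachable_P3P1_free (l := l) (V := [set: T]) sym irr free pc.
have [a' [Ra [pa' _ _] Ca]] := partT a _ pa (palT a) cT.
have [b' [Rb _ Cb]] := partT b _ pb (palT b) cT.
have Rab : reachable e a' b' (2 * #|T|).
  apply: reachable_relabel => //.
    by rewrite (card_imset_same_classes Cb); move: cT; rewrite cardsT card_ord.
  by split=> // u v uT vT; rewrite Ca ?Cb.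
have [p [W S]] := reachable_trans (reachable_trans Ra Rab) (reachable_sym pb Rb).
by exists p; split => //; move: S; rewrite cardsT; lia.
Qed.
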